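(* If $C\subseteq\mathbb{R}$ is infinite and $|\mathbb{R}\setminus C|=\mathfrak{c}$, then there is a two-point selection $f$ on $\mathbb{R}$ such that $C$ is not closed in $\tau_f$ and $C$ is not a $G_\delta$-set in $\tau_f$.
   Context: $\mathfrak{c}=|\mathbb{R}|$. A two-point selection on $\mathbb{R}$ is a function $f$ from the set of two-element subsets of $\mathbb{R}$ to $\mathbb{R}$ with $f(F)\in F$. Write $r<_f s$ if $f(\{r,s\})=r$ ($r\ne s$), $(\leftarrow,r)_f=\{x: x<_f r\}$, $(r,\rightarrow)_f=\{x: r<_f x\}$. The topology $\tau_f$ on $\mathbb{R}$ is generated (as a subbase) by all sets $(\leftarrow,r)_f$, $(r,\rightarrow)_f$, $r\in\mathbb{R}$. A $G_\delta$-set is a countable intersection of open sets. *)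

From Stdlib Require Export Reals List.
Open Scope R_scope.

(* A two-point selection on R: a function on two-element subsets {r,s}
   (r <> s) picking an element of the pair.  Represented by a binary
   function, symmetric on distinct arguments; its values on the diagonal
   are irrelevant. *)
Definition two_point_selection (f : R -> R -> R) : Prop :=
  forall r s : R, r <> s -> f r s = f s r /\ (f r s = r \/ f r s = s).

Definition lt_sel (f : R -> R -> R) (r s : R) : Prop := r <> s /\ f r s = r.

Definition ray_left (f : R -> R -> R) (r : R) : R -> Prop := fun x => lt_sel f x r.
Definition ray_right (f : R -> R -> R) (r : R) : R -> Prop := fun x => lt_sel f r x.

Definition subbasic (f : R -> R -> R) (S : R -> Prop) : Prop :=
  exists r : R, (forall x, S x <-> ray_left f r x) \/ (forall x, S x <-> ray_right f r x).

(* open sets of the topology generated by the subbase: unions of finite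
   intersections of subbasic sets (empty intersection = R). *)
Definition tau_open (f : R -> R -> R) (U : R -> Prop) : Prop :=
  forall x, U x ->
    exists l : list (R -> Prop),
      (forall S, In S l -> subbasic f S /\ S x) /\
      (forall y, (forall S, In S l -> S y) -> U y).

Definition tau_closed (f : R -> R -> R) (C : R -> Prop) : Prop :=
  tau_open f (fun x => ~ C x).

Definition tau_Gdelta (f : R -> R -> R) (C : R -> Prop) : Prop :=
  exists U : nat -> R -> Prop,
    (forall n, tau_open f (U n)) /\ (forall x, C x <-> forall n, U n x).

Definition infinite_set (C : R -> Prop) : Prop :=
  ~ exists l : list R, forall x, C x -> In x l.

Definition card_continuum (A : R -> Prop) : Prop :=
  exists g : R -> R,
    (forall y, A (g y)) /\
    (forall y1 y2, g y1 = g y2 -> y1 = y2) /\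
    (forall x, A x -> exists y, g y = x).

From Stdlib Require Import Lra Lia Cantor ClassicalEpsilon FunctionalExtensionality.
From Coquelicot Require Import Hierarchy.

(* Choose c0 and an injective sequence (d n) in C, and outside C a point p and an injective
   copy W of a set I.  Let the selection follow a tournament ≺ with
   c0 ≺ W(I) ≺ p ≺ d 0, d 1, ... ≺ all other points, where d n ≺ d m iff m < n, and where
   W u ≺ W v iff D u v, or not D v u and W u < W v, for an asymmetric relation D on I.
   Every subbasic neighbourhood of p contains a tail of d, so p lies in the closure of C.
   A subbasic neighbourhood of c0 is a ray (<-, r) with c0 ≺ r; it contains all of W(I) unless
   r = W v, and then it contains W u for every u with D u v.  If every sequence in I has a common
   D-dominator, countably many neighbourhoods of c0 therefore share a point W u outside C, so C
   is not G_delta.  On the Cantor space, code u as a sequence of coordinates and let u dominate v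
   when v is the k-th coordinate of u while u is none of the first k+1 coordinates of v;
   diagonalising against all coordinates of a sequence gives a common dominator. *)

Definition tournament (T : R -> R -> Prop) : Prop :=
  (forall x y, T x y -> ~ T y x) /\ (forall x y, x <> y -> T x y \/ T y x).

Definition selection_of (T : R -> R -> Prop) (x y : R) : R :=
  if excluded_middle_informative (T x y) then x else y.

Lemma selection_of_two_point T : tournament T -> two_point_selection (selection_of T).
Proof.
  intros [Tasym Ttotal] x y Hxy. unfold selection_of.
  destruct (excluded_middle_informative (T x y)) as [Txy|nTxy],
           (excluded_middle_informative (T y x)) as [Tyx|nTyx];
    try tauto.
  - exfalso. exact (Tasym x y Txy Tyx).
  - destruct (Ttotal x y Hxy); tauto.
Qed.

Lemma lt_sel_selection_of T x y : tournament T -> lt_sel (selection_of T) x y <-> T x y.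
Proof.
  intros [Tasym _]. unfold lt_sel, selection_of.
  destruct (excluded_middle_informative (T x y)) as [Txy|nTxy]; split; try tauto.
  - intros _. split; [|reflexivity]. intros <-. exact (Tasym x x Txy Txy).
  - intros [Hxy Hyx]. congruence.
Qed.

Lemma tau_open_filter f (F : (R -> Prop) -> Prop) {FF : Filter F} x :
  (forall r, lt_sel f x r -> F (ray_left f r)) ->
  (forall r, lt_sel f r x -> F (ray_right f r)) ->
  forall U, tau_open f U -> U x -> F U.
Proof.
  intros Hleft Hright U HU Ux.
  destruct (HU x Ux) as [l [Hl HlU]].
  apply (filter_imp _ _ HlU). clear HlU.
  induction l as [|S l IH].
  - apply filter_imp with (P := fun _ => True); [intros y _ S []|apply filter_true].
  - assert (FS : F S).
    { destruct (Hl S (or_introl eq_refl)) as [[r [Hr|Hr]] Sx].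
      - apply (filter_imp (ray_left f r)); [intros y; apply Hr|]. apply Hleft, Hr, Sx.
      - apply (filter_imp (ray_right f r)); [intros y; apply Hr|]. apply Hright, Hr, Sx. }
    assert (Fl : F (fun y => forall S', In S' l -> S' y)).
    { apply IH. intros S' HS'. apply Hl. now right. }
    refine (filter_imp _ _ _ (filter_and _ _ FS Fl)).
    intros y [Sy Hly] S' [<-|HS']; [exact Sy | exact (Hly S' HS')].
Qed.

Section Construction.

Variable C : R -> Prop.

Variables (I : Type) (D : I -> I -> Prop).
Hypothesis I_inhabited : inhabited I.
Hypothesis D_asym : forall u v, D u v -> ~ D v u.
Hypothesis D_seq : forall s : nat -> I, exists u, forall k, D u (s k).

Variables (c0 p : R) (W : I -> R) (d : nat -> R).
Hypotheses (c0_in : C c0) (p_out : ~ C p) (W_out : forall u, ~ C (W u))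
  (d_in : forall n, C (d n)) (p_not_W : forall u, p <> W u) (d_not_c0 : forall n, d n <> c0)
  (W_inj : forall u v, W u = W v -> u = v) (d_inj : forall n m, d n = d m -> n = m).

Inductive label : Type := Base | Copy (u : I) | Limit | Seq (n : nat) | Rest.

Definition rank (a : label) : nat :=
  match a with Base => 0 | Copy _ => 1 | Limit => 2 | Seq _ => 3 | Rest => 4 end.

Definition label_of (x : R) : label :=
  match excluded_middle_informative (x = c0),
        excluded_middle_informative (exists u, x = W u),
        excluded_middle_informative (x = p),
        excluded_middle_informative (exists n, x = d n) with
  | left _, _, _, _ => Base
  | _, left H, _, _ => Copy (proj1_sig (constructive_indefinite_description _ H))
  | _, _, left _, _ => Limit
  | _, _, _, left H => Seq (proj1_sig (constructive_indefinite_description _ H))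
  | _, _, _, _ => Rest
  end.

Inductive label_spec (x : R) : label -> Prop :=
  | LabelBase : x = c0 -> label_spec x Base
  | LabelCopy u : x = W u -> label_spec x (Copy u)
  | LabelLimit : x = p -> label_spec x Limit
  | LabelSeq n : x = d n -> label_spec x (Seq n)
  | LabelRest : x <> c0 -> (forall u, x <> W u) -> x <> p -> (forall n, x <> d n) ->
      label_spec x Rest.

Lemma labelP x : label_spec x (label_of x).
Proof.
  unfold label_of.
  destruct (excluded_middle_informative (x = c0)); [now constructor|].
  destruct (excluded_middle_informative (exists u, x = W u)) as [H|].
  { constructor. exact (proj2_sig (constructive_indefinite_description _ H)). }
  destruct (excluded_middle_informative (x = p)); [now constructor|].
  destruct (excluded_middle_informative (exists n, x = d n)) as [H|].
  - constructor. exact (proj2_sig (constructive_indefinite_description _ H)).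
  - constructor; eauto.
Qed.

Lemma c0_not_W u : c0 <> W u.
Proof. intros E. apply (W_out u). rewrite <- E. exact c0_in. Qed.

Lemma c0_not_p : c0 <> p.
Proof. intros E. apply p_out. rewrite <- E. exact c0_in. Qed.

Lemma W_not_d u n : W u <> d n.
Proof. intros E. apply (W_out u). rewrite E. apply d_in. Qed.

Lemma p_not_d n : p <> d n.
Proof. intros E. apply p_out. rewrite E. apply d_in. Qed.

Lemma label_of_c0 : label_of c0 = Base.
Proof.
  destruct (labelP c0) as [|u E|E|n E|Hc0 _ _ _]; [reflexivity|exfalso..].
  - exact (c0_not_W u E).
  - exact (c0_not_p E).
  - exact (d_not_c0 n (eq_sym E)).
  - exact (Hc0 eq_refl).
Qed.

Lemma label_of_W u : label_of (W u) = Copy u.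
Proof.
  destruct (labelP (W u)) as [E|v E|E|n E|_ HW _ _]; [exfalso| |exfalso..].
  - exact (c0_not_W u (eq_sym E)).
  - f_equal. exact (eq_sym (W_inj _ _ E)).
  - exact (p_not_W u (eq_sym E)).
  - exact (W_not_d u n E).
  - exact (HW u eq_refl).
Qed.

Lemma label_of_p : label_of p = Limit.
Proof.
  destruct (labelP p) as [E|u E|E|n E|_ _ Hp _]; [exfalso|exfalso| |exfalso..].
  - exact (c0_not_p (eq_sym E)).
  - exact (p_not_W u E).
  - reflexivity.
  - exact (p_not_d n E).
  - exact (Hp eq_refl).
Qed.

Lemma label_of_d n : label_of (d n) = Seq n.
Proof.
  destruct (labelP (d n)) as [E|u E|E|m E|_ _ _ Hd]; [exfalso..| |exfalso].
  - exact (d_not_c0 n E).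
  - exact (W_not_d u n (eq_sym E)).
  - exact (p_not_d n (eq_sym E)).
  - f_equal. exact (eq_sym (d_inj _ _ E)).
  - exact (Hd n eq_refl).
Qed.

Definition beats (x y : R) : Prop :=
  match label_of x, label_of y with
  | Copy u, Copy v => D u v \/ (~ D v u /\ x < y)
  | Seq n, Seq m => (m < n)%nat
  | a, b => (rank a < rank b)%nat \/ (rank a = rank b /\ x < y)
  end.

Lemma beats_asym x y : beats x y -> ~ beats y x.
Proof.
  unfold beats; destruct (labelP x), (labelP y); subst; simpl; try lia.
  all: intros [Bxy|[Bxy Bxy']] [Byx|[Byx Byx']]; solve [lia | lra | tauto | eapply D_asym; eauto].
Qed.

Lemma beats_total x y : x <> y -> beats x y \/ beats y x.
Proof.
  unfold beats; destruct (labelP x), (labelP y); subst; simpl; intros Hxy; try lia; try congruence.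
  - destruct (classic (D u u0)), (classic (D u0 u)); try tauto.
    destruct (Rtotal_order (W u) (W u0)) as [|[|]]; tauto.
  - destruct (Nat.lt_trichotomy n n0) as [|[->|]]; tauto.
  - destruct (Rtotal_order x y) as [|[|]]; tauto.
Qed.
Lemma beats_tournament : tournament beats.
Proof. split; [exact beats_asym | exact beats_total]. Qed.

Lemma lt_sel_beats x y : lt_sel (selection_of beats) x y <-> beats x y.
Proof. exact (lt_sel_selection_of beats x y beats_tournament). Qed.

Lemma limit_beats_eventually r : beats p r -> eventually (fun n => beats (d n) r).
Proof.
  unfold eventually, beats. rewrite label_of_p. setoid_rewrite label_of_d.
  destruct (labelP r); simpl; try lia.
  - intros [Hpp|[_ Hpp]]; lia || lra.
  - intros _. exists (S n). intros m Hm. lia.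
  - intros _. exists 0%nat. intros m _. left. lia.
Qed.

Lemma beats_limit_forall r : beats r p -> forall n, beats r (d n).
Proof.
  unfold beats. rewrite label_of_p. intros Hr n. rewrite label_of_d. revert Hr.
  destruct (labelP r); simpl; lia.
Qed.

Lemma selection_not_closed : ~ tau_closed (selection_of beats) C.
Proof.
  intros Hclosed.
  assert (Hev : filtermap d eventually (fun x => ~ C x)).
  { apply (tau_open_filter (selection_of beats) _ p); [| | exact Hclosed | exact p_out].
    - intros r Hr. apply lt_sel_beats, limit_beats_eventually in Hr.
      exact (filter_imp _ _ (fun n => proj2 (lt_sel_beats _ _)) Hr).
    - intros r Hr. apply lt_sel_beats in Hr.
      exists 0%nat. intros n _. apply lt_sel_beats, beats_limit_forall, Hr. }
  destruct Hev as [N HN]. exact (HN N (le_n N) (d_in N)).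
Qed.

Definition contains_dominators (S : R -> Prop) : Prop :=
  exists s : nat -> I, forall u, (forall k, D u (s k)) -> S (W u).

Lemma contains_dominators_countable_inter (S : nat -> R -> Prop) :
  (forall n, contains_dominators (S n)) -> contains_dominators (fun x => forall n, S n x).
Proof.
  intros HS. destruct (choice _ HS) as [s Hs].
  exists (fun k => let (n, j) := Cantor.of_nat k in s n j).
  intros u Hu n. apply Hs. intros j.
  specialize (Hu (Cantor.to_nat (n, j))). rewrite Cantor.cancel_of_to in Hu. exact Hu.
Qed.

Lemma contains_dominators_filter : Filter contains_dominators.
Proof.
  constructor.
  - destruct I_inhabited as [i]. now exists (fun _ => i).
  - intros S T HS HT.
    destruct (contains_dominators_countable_inter (fun n => match n with O => S | _ => T end))
      as [s Hs]; [now intros []|].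
    exists s. intros u Hu. exact (conj (Hs u Hu 0%nat) (Hs u Hu 1%nat)).
  - intros S T HST [s Hs]. exists s. auto.
Qed.

Lemma not_beats_base r : ~ beats r c0.
Proof.
  unfold beats. rewrite label_of_c0. destruct (labelP r); simpl; try lia.
  intros [Hr|[_ Hr]]; lia || lra.
Qed.

Lemma base_beats_contains_dominators r : beats c0 r -> contains_dominators (fun x => beats x r).
Proof.
  unfold contains_dominators, beats. rewrite label_of_c0. setoid_rewrite label_of_W.
  destruct (labelP r) as [E|v E|E|n E|]; simpl; intros Hr.
  - exfalso. destruct Hr as [Hr|[_ Hr]]; lia || lra.
  - exists (fun _ => v). intros u Hu. left. exact (Hu 0%nat).
  all: destruct I_inhabited as [i]; exists (fun _ => i); intros u _; left; lia.
Qed.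

Lemma selection_not_Gdelta : ~ tau_Gdelta (selection_of beats) C.
Proof.
  intros [U [U_open HU]].
  assert (HUc : forall n, contains_dominators (U n)).
  { intros n. apply (tau_open_filter (FF := contains_dominators_filter) (selection_of beats) _ c0);
      [| | apply U_open | apply HU, c0_in].
    - intros r Hr. apply lt_sel_beats, base_beats_contains_dominators in Hr.
      destruct Hr as [s Hs]. exists s. intros u Hu. apply lt_sel_beats, Hs, Hu.
    - intros r Hr. apply lt_sel_beats, not_beats_base in Hr as []. }
  destruct (contains_dominators_countable_inter U HUc) as [s Hs].
  destruct (D_seq s) as [u Hu].
  exact (W_out u (proj2 (HU (W u)) (Hs u Hu))).
Qed.

Theorem selection_not_closed_not_Gdelta :
  exists f, two_point_selection f /\ ~ tau_closed f C /\ ~ tau_Gdelta f C.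
Proof.
  exists (selection_of beats). split; [exact (selection_of_two_point _ beats_tournament)|].
  split; [exact selection_not_closed | exact selection_not_Gdelta].
Qed.

End Construction.

Definition cantor_space := nat -> bool.

Definition coord (u : cantor_space) (k : nat) : cantor_space :=
  fun j => u (S (2 * Cantor.to_nat (k, j)))%nat.

Definition pack (t : nat -> bool) (s : nat -> cantor_space) : cantor_space :=
  fun n => if Nat.even n then t (Nat.div2 n)
           else let (k, j) := Cantor.of_nat (Nat.div2 n) in s k j.

Lemma pack_double t s m : pack t s (2 * m)%nat = t m.
Proof.
  unfold pack. rewrite Nat.even_mul, Nat.div2_double. reflexivity.
Qed.

Lemma coord_pack t s k : coord (pack t s) k = s k.
Proof.
  apply functional_extensionality. intros j. unfold coord, pack.
  rewrite Nat.even_succ, Nat.odd_mul, Nat.div2_succ_double, Cantor.cancel_of_to.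
  reflexivity.
Qed.

Definition dominates (u v : cantor_space) : Prop :=
  exists k, coord u k = v /\ forall j, (j <= k)%nat -> coord v j <> u.

Lemma dominates_asym u v : dominates u v -> ~ dominates v u.
Proof.
  intros [k [Huv Hv]] [k' [Hvu Hu]].
  destruct (Nat.le_gt_cases k' k).
  - exact (Hv k' H Hvu).
  - apply (Hu k); [lia | exact Huv].
Qed.

Lemma dominates_seq (s : nat -> cantor_space) : exists u, forall k, dominates u (s k).
Proof.
  set (G := fun m => let (k, j) := Cantor.of_nat m in coord (s k) j).
  set (u := pack (fun m => negb (G m (2 * m)%nat)) s).
  assert (Hdiag : forall m, G m <> u).
  { intros m Hm. pose proof (pack_double (fun m => negb (G m (2 * m)%nat)) s m) as Hu.
    fold u in Hu. rewrite <- Hm in Hu. destruct (G m (2 * m)%nat); discriminate. }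
  exists u. intros k. exists k. split; [apply coord_pack|].
  intros j _ Hj. apply (Hdiag (Cantor.to_nat (k, j))).
  unfold G. rewrite Cantor.cancel_of_to. exact Hj.
Qed.

(* Digits 0/1 in base 3: everything after the first differing digit weighs at most half of it,
   so the first difference decides the order of the sums. *)
Fixpoint partial_sum (b : nat -> bool) (n : nat) : R :=
  match n with
  | O => 0
  | S n => partial_sum b n + (if b n then (/3) ^ n else 0)
  end.

Lemma pow_inv3_pos n : 0 < (/3) ^ n.
Proof. apply pow_lt. lra. Qed.

Lemma digit_bounds (b : nat -> bool) n : 0 <= (if b n then (/3) ^ n else 0) <= (/3) ^ n.
Proof. pose proof (pow_inv3_pos n). destruct (b n); lra. Qed.

Lemma partial_sum_le b m n : (m <= n)%nat -> partial_sum b m <= partial_sum b n.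
Proof.
  induction 1 as [|n _ IH]; [lra|].
  simpl. pose proof (digit_bounds b n). lra.
Qed.

Lemma partial_sum_tail b m n :
  partial_sum b (m + n) <= partial_sum b m + 3/2 * ((/3) ^ m - (/3) ^ (m + n)).
Proof.
  induction n as [|n IH].
  - rewrite Nat.add_0_r. lra.
  - rewrite Nat.add_succ_r. simpl. pose proof (digit_bounds b (m + n)). lra.
Qed.

Lemma partial_sum_le_head b m n :
  partial_sum b n <= partial_sum b m + 3/2 * (/3) ^ m.
Proof.
  pose proof (pow_inv3_pos m). pose proof (pow_inv3_pos n).
  destruct (Nat.le_gt_cases n m) as [Hnm|Hmn].
  - pose proof (partial_sum_le b n m Hnm). lra.
  - replace n with (m + (n - m))%nat by lia.
    pose proof (partial_sum_tail b m (n - m)). pose proof (pow_inv3_pos (m + (n - m))). lra.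
Qed.

Lemma partial_sum_agree b b' n :
  (forall k, (k < n)%nat -> b k = b' k) -> partial_sum b n = partial_sum b' n.
Proof.
  induction n as [|n IH]; intros Hbb'; [reflexivity|]. simpl.
  rewrite IH by (intros; apply Hbb'; lia). rewrite (Hbb' n) by lia. reflexivity.
Qed.

Definition cantor_real (b : nat -> bool) : R.
Proof.
  refine (proj1_sig (completeness (fun x => exists n, x = partial_sum b n) _ _)).
  - exists (3/2). intros x [n ->]. pose proof (partial_sum_le_head b 0 n). simpl in *. lra.
  - exists 0, O. reflexivity.
Defined.

Lemma cantor_real_lub b : is_lub (fun x => exists n, x = partial_sum b n) (cantor_real b).
Proof. exact (proj2_sig (completeness _ _ _)). Qed.

Lemma partial_sum_le_cantor_real b n : partial_sum b n <= cantor_real b.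
Proof. apply (cantor_real_lub b). now exists n. Qed.

Lemma cantor_real_le b B : (forall n, partial_sum b n <= B) -> cantor_real b <= B.
Proof.
  intros HB. apply (cantor_real_lub b). intros y [n ->]. apply HB.
Qed.

Lemma cantor_real_le_3_2 b : cantor_real b <= 3/2.
Proof.
  apply cantor_real_le. intros n. pose proof (partial_sum_le_head b 0 n). simpl in *. lra.
Qed.

Lemma cantor_real_lt b b' n :
  (forall k, (k < n)%nat -> b k = b' k) -> b' n = false -> b n = true ->
  cantor_real b' < cantor_real b.
Proof.
  intros Hagree Hb' Hb.
  pose proof (partial_sum_le_cantor_real b (S n)) as Hlow.
  assert (Hup : cantor_real b' <= partial_sum b' (S n) + 3/2 * (/3) ^ S n).
  { apply cantor_real_le. intros m. apply partial_sum_le_head. }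
  simpl in Hlow, Hup. rewrite Hb in Hlow. rewrite Hb' in Hup.
  rewrite (partial_sum_agree b b' n Hagree) in Hlow.
  pose proof (pow_inv3_pos n). lra.
Qed.

Lemma cantor_real_inj b b' : cantor_real b = cantor_real b' -> b = b'.
Proof.
  intros Heq.
  assert (Hagree : forall n k, (k < n)%nat -> b k = b' k).
  { induction n as [|n IH]; intros k Hk; [lia|].
    destruct (Nat.eq_dec k n) as [->|]; [|apply IH; lia].
    destruct (b n) eqn:Hb, (b' n) eqn:Hb'; try reflexivity.
    - pose proof (cantor_real_lt b b' n IH Hb' Hb). lra.
    - pose proof (cantor_real_lt b' b n (fun k Hk => eq_sym (IH k Hk)) Hb Hb'). lra. }
  apply functional_extensionality. intros k. apply (Hagree (S k)). lia.
Qed.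

Definition fresh (C : R -> Prop) (l : list R) : R :=
  epsilon (inhabits 0) (fun x => C x /\ ~ In x l).

Fixpoint fresh_prefix (C : R -> Prop) (n : nat) : list R :=
  match n with
  | O => nil
  | S n => fresh C (fresh_prefix C n) :: fresh_prefix C n
  end.

Lemma fresh_spec C l : infinite_set C -> C (fresh C l) /\ ~ In (fresh C l) l.
Proof.
  intros Hinf. unfold fresh. apply epsilon_spec. apply NNPP. intros Hnone.
  apply Hinf. exists l. intros x Cx. apply NNPP. intros Hx. apply Hnone. now exists x.
Qed.

Lemma infinite_set_injective_seq C : infinite_set C ->
  exists a : nat -> R, (forall n, C (a n)) /\ (forall n m, a n = a m -> n = m).
Proof.
  intros Hinf. set (a n := fresh C (fresh_prefix C n)).
  assert (Hprefix : forall k n, (k < n)%nat -> In (a k) (fresh_prefix C n)).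
  { intros k n Hkn. induction Hkn as [|n _ IH]; [now left | now right]. }
  assert (Hfresh : forall k n, (k < n)%nat -> a k <> a n).
  { intros k n Hkn E. apply (proj2 (fresh_spec C (fresh_prefix C n) Hinf)).
    fold (a n). rewrite <- E. apply Hprefix, Hkn. }
  exists a. split; [intros n; apply fresh_spec, Hinf|].
  intros n m E. destruct (Nat.lt_trichotomy n m) as [H|[H|H]]; [exfalso| exact H |exfalso].
  - exact (Hfresh n m H E).
  - exact (Hfresh m n H (eq_sym E)).
Qed.

Theorem theorem3p17 (C : R -> Prop) :
  infinite_set C ->
  card_continuum (fun x => ~ C x) ->
  exists f : R -> R -> R,
    two_point_selection f /\ ~ tau_closed f C /\ ~ tau_Gdelta f C.
Proof.
  intros Hinf [g [g_out [g_inj _]]].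
  destruct (infinite_set_injective_seq C Hinf) as [a [a_in a_inj]].
  apply (selection_not_closed_not_Gdelta C cantor_space dominates (inhabits (fun _ => false))
           dominates_asym dominates_seq (a 0%nat) (g 2) (fun u => g (cantor_real u))
           (fun n => a (S n))).
  - exact (a_in 0%nat).
  - apply g_out.
  - intros u. apply g_out.
  - intros n. apply a_in.
  - intros u E. apply g_inj in E. pose proof (cantor_real_le_3_2 u). lra.
  - intros n E. apply a_inj in E. discriminate.
  - intros u v E. apply cantor_real_inj, g_inj, E.
  - intros n m E. apply a_inj in E. now injection E.
Qed.
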